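(* Let $\mathcal{A}=\mathcal{R}*_K\mathcal{S}*_L\mathcal{T}\in\mathbb{C}^{I_1\times\cdots\times I_N\times J_1\times\cdots\times J_M}$, where $\mathcal{R}\in\mathbb{C}^{I_1\times\cdots\times I_N\times H_1\times\cdots\times H_K}$, $\mathcal{S}\in\mathbb{C}^{H_1\times\cdots\times H_K\times G_1\times\cdots\times G_L}$ and $\mathcal{T}\in\mathbb{C}^{G_1\times\cdots\times G_L\times J_1\times\cdots\times J_M}$. Then $\mathcal{A}_{\pi\dagger}=\mathcal{A}^{\dagger}$ if and only if $(\mathcal{R}^{\dagger}*_N\mathcal{A}*_M\mathcal{T}^{\dagger})^{\dagger}=\mathcal{T}*_M\mathcal{A}^{\dagger}*_N\mathcal{R}$. In that case $\mathcal{A}_{\pi\dagger}=\mathcal{A}^{\dagger}=\mathcal{B}=\mathcal{C}$, where $\mathcal{B}=\mathcal{T}^{\dagger}*_L(\mathcal{A}*_M\mathcal{T}^{\dagger})^{\dagger}$ and $\mathcal{C}=(\mathcal{R}^{\dagger}*_N\mathcal{A})^{\dagger}*_K\mathcal{R}^{\dagger}$.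
   Context: $\mathbb{C}^{I_1\times\cdots\times I_N}$ denotes the set of complex tensors of order $N$ and dimension $I_1\times\cdots\times I_N$. For $\mathcal{A}\in\mathbb{C}^{I_1\times\cdots\times I_N\times K_1\times\cdots\times K_N}$ and $\mathcal{B}\in\mathbb{C}^{K_1\times\cdots\times K_N\times J_1\times\cdots\times J_M}$, the Einstein product $\mathcal{A}*_N\mathcal{B}$ is defined by $(\mathcal{A}*_N\mathcal{B})_{i_1\dots i_N j_1\dots j_M}=\sum_{k_1,\dots,k_N}a_{i_1\dots i_N k_1\dots k_N}b_{k_1\dots k_N j_1\dots j_M}$; it is associative. $\mathcal{A}^H$ denotes the conjugate transpose. For $\mathcal{A}\in\mathbb{C}^{I_1\times\cdots\times I_N\times J_1\times\cdots\times J_M}$ the Moore–Penrose inverse $\mathcal{A}^{\dagger}$ is the unique $\mathcal{X}\in\mathbb{C}^{J_1\times\cdots\times J_M\times I_1\times\cdots\times I_N}$ with $\mathcal{A}*_M\mathcal{X}*_N\mathcal{A}=\mathcal{A}$, $\mathcal{X}*_N\mathcal{A}*_M\mathcal{X}=\mathcal{X}$, $(\mathcal{A}*_M\mathcal{X})^H=\mathcal{A}*_M\mathcal{X}$, $(\mathcal{X}*_N\mathcal{A})^H=\mathcal{X}*_N\mathcal{A}$. Given the factorization $\mathcal{A}=\mathcal{R}*_K\mathcal{S}*_L\mathcal{T}$, the product Moore–Penrose inverse of $\mathcal{A}$ is $\mathcal{A}_{\pi\dagger}=\mathcal{T}^{\dagger}*_L(\mathcal{R}^{\dagger}*_N\mathcal{A}*_M\mathcal{T}^{\dagger})^{\dagger}*_K\mathcal{R}^{\dagger}$.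 *)

From HB Require Import structures.
From mathcomp Require Import all_boot all_order all_algebra.
From mathcomp Require Import reals complex.
From Stdlib Require Import ClassicalEpsilon.
Set Implicit Arguments. Unset Strict Implicit. Unset Printing Implicit Defensive.
Import Order.TTheory GRing.Theory Num.Theory.
Local Open Scope ring_scope.

Fixpoint midx (d : seq nat) : finType :=
  if d is n :: d' then ('I_n * midx d')%type else unit.

Section Tensors.
Variable R : realType.
Local Notation C := (R[i]).

(* A tensor in C^{I_1 x ... x I_N x J_1 x ... x J_M}, with I = [:: I_1; ...; I_N]
   and J = [:: J_1; ...; J_M]. *)
Definition tensor (I J : seq nat) := midx I -> midx J -> C.

Definition einstein (I K J : seq nat) (A : tensor I K) (B : tensor K J) : tensor I J :=
  fun i j => \sum_(k : midx K) A i k * B k j.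

Definition ctrans (I J : seq nat) (A : tensor I J) : tensor J I :=
  fun j i => (A i j)^*.

Definition is_MP (I J : seq nat) (A : tensor I J) (X : tensor J I) : Prop :=
  [/\ einstein (einstein A X) A = A,
      einstein (einstein X A) X = X,
      ctrans (einstein A X) = einstein A X &
      ctrans (einstein X A) = einstein X A].

Definition mpinv (I J : seq nat) (A : tensor I J) : tensor J I :=
  epsilon (inhabits (fun _ _ => 0)) (is_MP A).

Definition pmpinv (I H G J : seq nat) (Rt : tensor I H) (T : tensor G J)
  (A : tensor I J) : tensor J I :=
  einstein (einstein (mpinv T) (mpinv (einstein (einstein (mpinv Rt) A) (mpinv T))))
           (mpinv Rt).
End Tensors.

(* Write A+, R+, T+ for Moore-Penrose inverses and M+ for that of M := R+ A T+.
   As A = R S T factors through R on the left and through T on the right, its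
   inverse is absorbed by the corresponding projections: A+ = T+ T A+ = A+ R R+;
   likewise M = (R+ A) T+ = R+ (A T+) gives M+ = T T+ M+ = M+ R+ R.  Hence
   T+ M+ R+ = A+ yields M+ = T T+ M+ R+ R = T A+ R, and conversely M+ = T A+ R
   yields T+ M+ R+ = T+ T A+ R R+ = A+.  In that case, substituting
   A+ = T+ M+ R+ into the Penrose equations of A and of M shows at once that
   M+ R+ = (A T+)+ and T+ M+ = (R+ A)+, so B = C = A+. *)

From HB Require Import structures.
From mathcomp Require Import all_boot all_order all_algebra.
From mathcomp Require Import reals complex boolp functions.
From Stdlib Require Import ClassicalEpsilon.
Set Implicit Arguments. Unset Strict Implicit. Unset Printing Implicit Defensive.
Import Order.TTheory GRing.Theory Num.Theory.
Local Open Scope ring_scope.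

Section FinMatrix.
Variable R : realType.
Local Notation C := (R[i]).
Local Notation mx X Y := (X -> Y -> C).
Implicit Types X Y Z W : finType.

Definition mmul X Y Z (A : mx X Y) (B : mx Y Z) : mx X Z :=
  fun x z => \sum_y A x y * B y z.

Definition ctr X Y (A : mx X Y) : mx Y X := fun y x => (A x y)^*.

Local Infix "**" := mmul (at level 40, left associativity).
Local Notation "A ^H" := (ctr A) (at level 8, format "A ^H").

Definition is_mpinv X Y (A : mx X Y) (B : mx Y X) : Prop :=
  [/\ A ** B ** A = A, B ** A ** B = B, (A ** B)^H = A ** B & (B ** A)^H = B ** A].

Lemma mx_ext X Y (A B : mx X Y) : (forall x y, A x y = B x y) -> A = B.
Proof. by move=> eqAB; apply/funext=> x; apply/funext=> y. Qed.

Lemma mx_subE X Y (A B : mx X Y) x y : (A - B) x y = A x y - B x y.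
Proof. by []. Qed.

Lemma mmulA X Y Z W (A : mx X Y) (B : mx Y Z) (D : mx Z W) :
  A ** (B ** D) = A ** B ** D.
Proof.
apply: mx_ext => x w; rewrite /mmul.
under eq_bigr do rewrite mulr_sumr.
under [RHS]eq_bigr do rewrite mulr_suml.
by rewrite exchange_big; apply: eq_bigr => y _; apply: eq_bigr => z _; rewrite mulrA.
Qed.

Lemma mmulBl X Y Z (A B : mx X Y) (D : mx Y Z) : (A - B) ** D = A ** D - B ** D.
Proof.
apply: mx_ext => x z; rewrite mx_subE -sumrB.
by apply: eq_bigr => y _; rewrite mx_subE mulrBl.
Qed.

Lemma mmulBr X Y Z (D : mx X Y) (A B : mx Y Z) : D ** (A - B) = D ** A - D ** B.
Proof.
apply: mx_ext => x z; rewrite mx_subE -sumrB.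
by apply: eq_bigr => y _; rewrite mx_subE mulrBr.
Qed.

Lemma mmul0 X Y Z (A : mx X Y) : A ** (0 : mx Y Z) = 0.
Proof. by apply: mx_ext => x z; rewrite /mmul big1 // => y _; rewrite mulr0. Qed.

Lemma ctrK X Y (A : mx X Y) : A^H^H = A.
Proof. by apply: mx_ext => x y; rewrite /ctr conjCK. Qed.

Lemma ctrM X Y Z (A : mx X Y) (B : mx Y Z) : (A ** B)^H = B^H ** A^H.
Proof.
apply: mx_ext => z x; rewrite /ctr /mmul rmorph_sum.
by apply: eq_bigr => y _; rewrite rmorphM mulrC.
Qed.

Lemma ctrB X Y (A B : mx X Y) : (A - B)^H = A^H - B^H.
Proof. by apply: mx_ext => y x; rewrite !mx_subE /ctr rmorphB. Qed.

Lemma ctr_mmul_eq0 X Y (A : mx X Y) : A^H ** A = 0 -> A = 0.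
Proof.
move=> AHA0; apply: mx_ext => x y.
have /psumr_eq0P diag0 := congr1 (fun M : mx Y Y => M y y) AHA0.
apply/eqP; rewrite -mul_conjC_eq0 mulrC; apply/eqP.
by apply: diag0 => // x' _; rewrite mulrC mul_conjC_ge0.
Qed.

Lemma gram_cancel X Y (A : mx X Y) (B : mx Y Y) :
  A^H ** A ** B = A^H ** A -> A ** B = A.
Proof.
move=> gramB; apply/eqP; rewrite -subr_eq0; apply/eqP/ctr_mmul_eq0.
have AHE : A^H ** (A ** B - A) = 0 by rewrite mmulBr mmulA gramB subrr.
by rewrite ctrB ctrM mmulBl -mmulA AHE mmul0 subrr.
Qed.

Lemma ginv_exists X Y (A : mx X Y) : exists G : mx Y X, A ** G ** A = A.
Proof.
pose M : 'M[C]_(#|X|, #|Y|) := \matrix_(i, j) A (enum_val i) (enum_val j).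
exists (fun y x => pinvmx M (enum_rank y) (enum_rank x)).
apply: mx_ext => x y.
have := congr1 (fun N : 'M_(_, _) => N (enum_rank x) (enum_rank y)) (mulmxKpV (submx_refl M)).
rewrite !mxE !enum_rankK => <-.
rewrite /mmul (reindex (@enum_val X predT)) /=; last exact/onW_bij/enum_val_bij.
apply: eq_bigr => k _; rewrite !mxE enum_rankK enum_valK; congr (_ * _).
rewrite (reindex (@enum_val Y predT)) /=; last exact/onW_bij/enum_val_bij.
by apply: eq_bigr => l _; rewrite !mxE enum_rankK enum_valK.
Qed.

Lemma gram_projector X Y (A : mx X Y) (G : mx Y Y) :
  A^H ** A ** G ** (A^H ** A) = A^H ** A ->
  A ** G ** A^H ** A = A /\ (A ** G ** A^H)^H = A ** G ** A^H.
Proof.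
have absorb G' : A^H ** A ** G' ** (A^H ** A) = A^H ** A -> A ** G' ** A^H ** A = A.
  by move=> gG'; rewrite -!mmulA; apply: gram_cancel; rewrite !mmulA -mmulA.
move=> gG; have gGH : A^H ** A ** G^H ** (A^H ** A) = A^H ** A.
  by move: (congr1 (@ctr _ _) gG); rewrite !ctrM ctrK !mmulA.
have PHP : (A ** G ** A^H)^H ** (A ** G ** A^H) = A ** G ** A^H.
  by rewrite !ctrM ctrK !mmulA absorb.
by split; [exact: absorb | rewrite -PHP ctrM ctrK PHP].
Qed.

(* With generalized inverses G2 of A^H A and G1 of A A^H, the orthogonal
   projections onto the ranges of A and A^H are A G2 A^H and A^H G1 A. *)
Lemma mpinv_exists X Y (A : mx X Y) : exists B, is_mpinv A B.
Proof.
have [G2 /gram_projector [PA PH]] := ginv_exists (A^H ** A).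
have [G1] := ginv_exists (A ** A^H).
have := gram_projector (A := A^H) (G := G1); rewrite !ctrK => /[apply] -[QA QH].
have AQ : A ** A^H ** G1 ** A = A.
  by move: (congr1 (@ctr _ _) QA); rewrite ctrM QH !ctrK !mmulA.
have QQ : A^H ** G1 ** A ** A^H ** G1 ** A = A^H ** G1 ** A.
  by move: (congr1 (mmul (A^H ** G1)) AQ); rewrite !mmulA.
have QPA : A^H ** G1 ** A ** G2 ** A^H ** A = A^H ** G1 ** A.
  by move: (congr1 (mmul (A^H ** G1)) PA); rewrite !mmulA.
have AB : A ** (A^H ** G1 ** A ** G2 ** A^H) = A ** G2 ** A^H by rewrite !mmulA AQ.
exists (A^H ** G1 ** A ** G2 ** A^H); split.
- by rewrite AB.
- by rewrite QPA !mmulA QQ.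
- by rewrite AB.
- by rewrite QPA.
Qed.

Section PenroseIdentities.
Variables (X Y : finType) (A : mx X Y) (B : mx Y X).
Hypothesis mpB : is_mpinv A B.

Lemma is_mpinv_sym : is_mpinv B A.
Proof. by case: mpB. Qed.

Lemma mpinv_ctr_r : B ** B^H ** A^H = B.
Proof. by case: mpB => _ BAB ABH _; rewrite -mmulA -ctrM ABH mmulA. Qed.

Lemma mpinv_ctr_l : A^H ** B^H ** B = B.
Proof. by case: mpB => _ BAB _ BAH; rewrite -ctrM BAH. Qed.

Lemma ctr_mmul_mpinvK : A^H ** A ** B = A^H.
Proof. by case: mpB => ABA _ ABH _; rewrite -mmulA -ABH -ctrM ABA. Qed.

Lemma mpinv_mmul_ctrK : B ** A ** A^H = A^H.
Proof. by case: mpB => ABA _ _ BAH; rewrite -BAH -ctrM mmulA ABA. Qed.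

End PenroseIdentities.

Lemma mpinv_uniq X Y (A : mx X Y) (B D : mx Y X) :
  is_mpinv A B -> is_mpinv A D -> B = D.
Proof.
move=> mpB mpD.
have BAD : B = B ** A ** D.
  by rewrite -{1}(mpinv_ctr_r mpB) -(ctr_mmul_mpinvK mpD) !mmulA (mpinv_ctr_r mpB).
have DAD : D = B ** A ** D.
  rewrite -{1}(mpinv_ctr_l mpD) -(mpinv_mmul_ctrK mpB) -!mmulA.
  by rewrite [A^H ** _]mmulA (mpinv_ctr_l mpD).
by rewrite BAD -DAD.
Qed.

Lemma mpinv_factor_r X Y Z (A : mx X Y) (Ad : mx Y X) (F : mx X Z) (T : mx Z Y)
    (Td : mx Y Z) :
  is_mpinv A Ad -> is_mpinv T Td -> A = F ** T -> Td ** T ** Ad = Ad.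
Proof.
move=> mpA mpT eqA.
by rewrite -(mpinv_ctr_l mpA) eqA ctrM !mmulA (mpinv_mmul_ctrK mpT).
Qed.

Lemma mpinv_factor_l X Y Z (A : mx X Y) (Ad : mx Y X) (Rt : mx X Z) (Rd : mx Z X)
    (F : mx Z Y) :
  is_mpinv A Ad -> is_mpinv Rt Rd -> A = Rt ** F -> Ad ** Rt ** Rd = Ad.
Proof.
move=> mpA mpR eqA.
rewrite -(mpinv_ctr_r mpA) eqA ctrM -!mmulA.
by rewrite [Rt^H ** _]mmulA (ctr_mmul_mpinvK mpR).
Qed.

Section ProductMPInverse.
Variables (XI XH XG XJ : finType).
Variables (Rt : mx XI XH) (S : mx XH XG) (T : mx XG XJ) (A : mx XI XJ).
Variables (Rd : mx XH XI) (Td : mx XJ XG) (Ad : mx XJ XI) (Md : mx XG XH).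
Hypotheses (eqA : A = Rt ** S ** T) (mpR : is_mpinv Rt Rd) (mpT : is_mpinv T Td).
Hypotheses (mpA : is_mpinv A Ad) (mpM : is_mpinv (Rd ** A ** Td) Md).

Lemma pmpinv_eq_mpinv_iff : Td ** Md ** Rd = Ad <-> Md = T ** Ad ** Rt.
Proof.
have TdTAd : Td ** T ** Ad = Ad by apply: mpinv_factor_r mpA mpT eqA.
have AdRRd : Ad ** Rt ** Rd = Ad.
  by apply: mpinv_factor_l mpA mpR _; rewrite eqA -mmulA.
have TTdMd : T ** Td ** Md = Md by apply: mpinv_factor_r mpM (is_mpinv_sym mpT) _.
have MdRdR : Md ** Rd ** Rt = Md.
  by apply: mpinv_factor_l mpM (is_mpinv_sym mpR) _; rewrite -mmulA.
split=> [<- | ->]; first by rewrite !mmulA TTdMd MdRdR.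
by rewrite !mmulA TdTAd AdRRd.
Qed.

Hypothesis pmpinvE : Td ** Md ** Rd = Ad.

Lemma mpinv_mmul_mpinv_r : is_mpinv (A ** Td) (Md ** Rd).
Proof.
case: mpA; rewrite -pmpinvE !mmulA => ABA _ ABH _.
case: mpM; rewrite !mmulA => _ MdMMd _ MdMH.
by split; rewrite !mmulA ?ABA ?MdMMd.
Qed.

Lemma mpinv_mpinv_mmul_l : is_mpinv (Rd ** A) (Td ** Md).
Proof.
case: mpA; rewrite -pmpinvE !mmulA => ABA _ _ BAH.
case: mpM; rewrite !mmulA => _ MdMMd MMdH _.
split; rewrite ?mmulA //.
- by move: (congr1 (mmul Rd) ABA); rewrite !mmulA.
- by move: (congr1 (mmul Td) MdMMd); rewrite !mmulA.
Qed.

End ProductMPInverse.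

Lemma einsteinE I K J (A : tensor R I K) (B : tensor R K J) : einstein A B = A ** B.
Proof. by []. Qed.

(* [is_MP] is [is_mpinv] at the index types [midx I] and [midx J]. *)
Lemma mpinvP I J (A : tensor R I J) : is_mpinv A (mpinv A).
Proof. by apply: epsilon_spec; have [B mpB] := mpinv_exists A; exists B. Qed.

Lemma mpinv_eq I J (A : tensor R I J) (B : tensor R J I) : is_mpinv A B -> mpinv A = B.
Proof. exact: mpinv_uniq (mpinvP A). Qed.

End FinMatrix.

Theorem theorem3p9 (R : realType) (I J H G : seq nat)
  (Rt : tensor R I H) (S : tensor R H G) (T : tensor R G J) (A : tensor R I J) :
  A = einstein (einstein Rt S) T ->
  (pmpinv Rt T A = mpinv A <->
     mpinv (einstein (einstein (mpinv Rt) A) (mpinv T))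
     = einstein (einstein T (mpinv A)) Rt) /\
  (pmpinv Rt T A = mpinv A ->
     let B := einstein (mpinv T) (mpinv (einstein A (mpinv T))) in
     let Cc := einstein (mpinv (einstein (mpinv Rt) A)) (mpinv Rt) in
     [/\ pmpinv Rt T A = mpinv A, mpinv A = B & B = Cc]).
Proof.
move=> eqA; have mpM := mpinvP (einstein (einstein (mpinv Rt) A) (mpinv T)).
rewrite /pmpinv !einsteinE in eqA mpM *.
have iff := pmpinv_eq_mpinv_iff eqA (mpinvP Rt) (mpinvP T) (mpinvP A) mpM.
split=> // pmpinvE /=.
rewrite (mpinv_eq (mpinv_mmul_mpinv_r (mpinvP A) mpM pmpinvE)).
rewrite (mpinv_eq (mpinv_mpinv_mmul_l (mpinvP A) mpM pmpinvE)).
by rewrite mmulA pmpinvE.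
Qed.
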